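(* Let $n\geq 2$ be an integer and let $D\subset\{0,1,\ldots,n^2\}$ be such that $\Delta:=D-D$ is sparse. Let $k\geq1$ and let $(\delta_1,\ldots,\delta_k),(\delta_1',\ldots,\delta_k')\in\Delta^k$ with $\delta_j\neq\delta_j'$ for some $1\le j\le k$. Then the $k$-tiles $\mathcal{E}_{\delta_1,\ldots,\delta_k}$ and $\mathcal{E}_{\delta_1',\ldots,\delta_k'}$ of $\mathcal{E}_n$ are disjoint.
   Context: Let $b:=-n+i$. $\mathcal{E}_n$ is the attractor of $\{z\mapsto b^{-1}(z+\delta): \delta\in\{0,\pm1,\ldots,\pm n^2\}\}$, i.e. $\mathcal{E}_n=\{\sum_{j\ge1}\delta_jb^{-j}: \delta_j\in\{-n^2,\ldots,n^2\}\}$. For $\delta_1,\ldots,\delta_k\in\{-n^2,\ldots,n^2\}$, the $k$-tile $\mathcal{E}_{\delta_1,\ldots,\delta_k}$ is $\{\sum_{j=1}^k\delta_jb^{-j}+b^{-k}e: e\in\mathcal{E}_n\}$. $\Delta$ is called sparse if for all $\delta\neq\delta'$ in $\Delta$, $|\delta-\delta'|>2$ when $n\geq5$, and $|\delta-\delta'|>3$ when $n\in\{2,3,4\}$. *)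

From Stdlib Require Import Reals ZArith List Lia.
From Coquelicot Require Import Coquelicot.
Open Scope R_scope.

Definition base (n : nat) : C := (- INR n, 1)%R.

Definition binvpow (n j : nat) : C := Cinv (Cpow (base n) j).

Definition digit (n : nat) (d : Z) : Prop :=
  (- Z.of_nat (n * n) <= d <= Z.of_nat (n * n))%Z.

Definition in_En (n : nat) (z : C) : Prop :=
  exists d : nat -> Z, (forall j, digit n (d j)) /\
    is_series (fun j : nat => Cmult (RtoC (IZR (d j))) (binvpow n (S j))) z.

Fixpoint csum (f : nat -> C) (k : nat) : C :=
  match k with
  | O => RtoC 0
  | S k' => Cplus (csum f k') (f k')
  end.

(* the k-tile E_{δ_1,...,δ_k}, with ds = [δ_1; ...; δ_k] and k = length ds *)
Definition in_tile (n : nat) (ds : list Z) (z : C) : Prop :=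
  exists e : C, in_En n e /\
    z = Cplus (csum (fun j => Cmult (RtoC (IZR (nth j ds 0%Z))) (binvpow n (S j)))
                    (length ds))
              (Cmult (binvpow n (length ds)) e).

Definition diffset (D : Z -> Prop) (x : Z) : Prop :=
  exists a b : Z, D a /\ D b /\ x = (a - b)%Z.

Definition sparse (n : nat) (Delta : Z -> Prop) : Prop :=
  forall d d' : Z, Delta d -> Delta d' -> d <> d' ->
    ((5 <= n)%nat -> (Z.abs (d - d') > 2)%Z) /\
    ((2 <= n <= 4)%nat -> (Z.abs (d - d') > 3)%Z).

(* A point of both tiles has two base-b expansions whose digit
   sequences f, f' differ first at some index j0 < k, and h := f - f' satisfies
   |h_j| <= 2n^2 and sum_j h_j b^(-j-1) = 0, hence
   h_(j0) = - sum_(i>=1) h_(j0+i) b^(-i).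
   The right-hand side is controlled by a Lyapunov function Phi for
   multiplication by 1/b: if K |Im u| + Phi (u/b) <= Phi u, then summing along
   the orbit u b^(-i) gives K |h_(j0)| |Im c| <= 2n^2 Phi (c/b) for every c.
   With Phi w = |Re w| + (n^2 - n + 1) |Im w| this forces |h_(j0)| < 3, or < 4
   when n <= 4, contradicting the sparseness of D - D. *)

From Stdlib Require Import Reals ZArith List Lia Lra Psatz.
From Coquelicot Require Import Coquelicot.
Open Scope R_scope.

Record lyapunov (v : C) (K : R) (Phi : C -> R) : Prop := {
  lyapunov_K_ge0 : 0 <= K;
  lyapunov_ge0 : forall u, 0 <= Phi u;
  lyapunov_decr : forall u, K * Rabs (Im u) + Phi (u * v)%C <= Phi u }.

Lemma filterlim_Im (s : C) : filterlim Im (locally s) (locally (Im s)).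
Proof. intros P [eps HP]. exists eps. intros y [_ Hy]. exact (HP _ Hy). Qed.

Section LyapunovBound.
Variables (v : C) (K G : R) (Phi : C -> R) (g : nat -> R) (w : C).
Hypothesis Phi_lyapunov : lyapunov v K Phi.
Hypothesis g_bound : forall i, Rabs (g i) <= G.

Let G_ge0 : 0 <= G := Rle_trans _ _ _ (Rabs_pos (g 0)) (g_bound 0).

Lemma lyapunov_term_bound i u :
  K * Rabs (Im (g i * u)%C) + G * Phi (u * v)%C <= G * Phi u.
Proof.
  destruct Phi_lyapunov as [K_ge0 _ Hdecr].
  rewrite im_scal_l, Rabs_mult.
  assert (0 <= (G - Rabs (g i)) * (K * Rabs (Im u))).
  { apply Rmult_le_pos; [pose proof (g_bound i); lra | apply Rmult_le_pos, Rabs_pos; exact K_ge0]. }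
  specialize (Hdecr u). nra.
Qed.

Lemma lyapunov_partial_sum N :
  K * Rabs (Im (sum_n (fun i => g i * (w * v ^ i))%C N)) + G * Phi (w * v ^ S N)%C
  <= G * Phi w.
Proof.
  induction N as [|N IH].
  - rewrite sum_O. replace (w * v ^ 1)%C with ((w * v ^ 0) * v)%C by (simpl; ring).
    replace (G * Phi w) with (G * Phi (w * v ^ 0)%C) by (f_equal; simpl; f_equal; ring).
    apply lyapunov_term_bound.
  - rewrite sum_Sn. change (plus ?a ?b) with (Cplus a b). rewrite im_plus.
    pose proof (lyapunov_term_bound (S N) (w * v ^ S N)%C) as Hterm.
    replace (w * v ^ S (S N))%C with (w * v ^ S N * v)%C by (simpl; ring).
    pose proof (Rabs_triang (Im (sum_n (fun i => g i * (w * v ^ i))%C N))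
                            (Im (g (S N) * (w * v ^ S N))%C)).
    assert (K_ge0 : 0 <= K) by apply Phi_lyapunov.
    nra.
Qed.

Lemma lyapunov_series_bound s :
  is_series (fun i => g i * (w * v ^ i))%C s -> K * Rabs (Im s) <= G * Phi w.
Proof.
  intros Hs.
  assert (Him : is_lim_seq (fun N => Im (sum_n (fun i => g i * (w * v ^ i))%C N)) (Im s)).
  { eapply filterlim_comp; [exact Hs | apply filterlim_Im]. }
  apply (is_lim_seq_le (fun N => K * Rabs (Im (sum_n (fun i => g i * (w * v ^ i))%C N)))
           (fun _ => G * Phi w) (K * Rabs (Im s)) (G * Phi w)).
  - intros N. pose proof (lyapunov_partial_sum N).
    assert (0 <= G * Phi (w * v ^ S N)%C).
    { apply Rmult_le_pos; [exact G_ge0 | apply Phi_lyapunov]. }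
    lra.
  - apply (is_lim_seq_scal_l _ K (Rabs (Im s))), (is_lim_seq_abs _ (Im s)), Him.
  - apply is_lim_seq_const.
Qed.
End LyapunovBound.

Lemma lyapunov_lift v K Phi :
  lyapunov v K Phi -> lyapunov v K (fun u => K * Rabs (Im u) + Phi (u * v)%C).
Proof.
  intros [K_ge0 Phi_ge0 Phi_decr]. split; [exact K_ge0 | |].
  - intros u. pose proof (Rmult_le_pos _ _ K_ge0 (Rabs_pos (Im u))). pose proof (Phi_ge0 (u * v)%C). lra.
  - intros u. pose proof (Phi_decr (u * v)%C). lra.
Qed.

Lemma sum_n_zero_below {G : AbelianMonoid} (a : nat -> G) N :
  (forall j, (j < N)%nat -> a j = zero) -> sum_n a N = a N.
Proof.
  induction N as [|N IH]; intros Ha; [apply sum_O|].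
  rewrite sum_Sn, IH by (intros; apply Ha; lia).
  rewrite (Ha N) by lia. apply plus_zero_l.
Qed.

Lemma is_series_Cmult_l (k : C) (a : nat -> C) (l : C) :
  is_series a l -> is_series (fun n => k * a n)%C (k * l)%C.
Proof. exact (is_series_scal_l k a l). Qed.

Lemma lyapunov_first_coeff v K Phi (G : R) (h : nat -> R) j0 (c : C) :
  lyapunov v K Phi -> v <> RtoC 0 ->
  (forall j, Rabs (h j) <= G) -> (forall j, (j < j0)%nat -> h j = 0) ->
  is_series (fun j => h j * v ^ S j)%C (RtoC 0) ->
  K * (Rabs (h j0) * Rabs (Im c)) <= G * Phi (c * v)%C.
Proof.
  intros HPhi v_nz h_bound h_below Hs.
  set (a := fun j => (h j * v ^ S j)%C) in Hs.
  assert (Hhead : sum_n a j0 = (h j0 * v ^ S j0)%C).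
  { apply (sum_n_zero_below a j0). intros j Hj. unfold a. rewrite h_below by exact Hj.
    change (@eq C (RtoC 0 * v ^ S j)%C (RtoC 0)). ring. }
  assert (Htail : is_series (fun i => a (S j0 + i)%nat) (- (h j0 * v ^ S j0))%C).
  { apply is_series_incr_n; [lia|].
    change (is_series a (Cplus (- (h j0 * v ^ S j0)) (sum_n a j0))).
    rewrite Hhead. replace (Cplus _ _) with (RtoC 0) by ring. exact Hs. }
  pose proof (Cpow_nz v (S j0) v_nz) as vj0_nz.
  apply (is_series_Cmult_l (c / v ^ S j0)%C) in Htail.
  assert (Hres : is_series (fun i => h (S j0 + i)%nat * ((c * v) * v ^ i))%C (- (h j0 * c))%C).
  { replace (- (h j0 * c))%C with ((c / v ^ S j0) * - (h j0 * v ^ S j0))%C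
      by (field; exact vj0_nz).
    eapply is_series_ext; [|exact Htail]. intros i. unfold a. simpl.
    rewrite Cpow_add_r. field. split; [apply Cpow_nz |]; exact v_nz. }
  pose proof (lyapunov_series_bound v K G Phi (fun i => h (S j0 + i)%nat) (c * v)%C HPhi
                (fun i => h_bound _) _ Hres) as Hb.
  rewrite im_opp, Rabs_Ropp, im_scal_l, Rabs_mult in Hb. exact Hb.
Qed.

Lemma base_neq0 n : base n <> RtoC 0.
Proof. intros H. injection H. lra. Qed.

Lemma binvpow_Cpow n j : binvpow n j = ((/ base n) ^ j)%C.
Proof. unfold binvpow. rewrite Cpow_inv; [reflexivity | apply base_neq0]. Qed.

Lemma sum_n_csum (a : nat -> C) N : sum_n a N = csum a (S N).
Proof.
  induction N as [|N IH]; simpl.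
  - rewrite sum_O. ring.
  - rewrite sum_Sn, IH. reflexivity.
Qed.

Lemma csum_ext_lt (a b : nat -> C) k :
  (forall j, (j < k)%nat -> a j = b j) -> csum a k = csum b k.
Proof.
  induction k as [|k IH]; intros Hab; simpl; [reflexivity|].
  rewrite IH by (intros; apply Hab; lia). rewrite (Hab k) by lia. reflexivity.
Qed.

Lemma tile_expansion n ds z : (1 <= length ds)%nat -> in_tile n ds z ->
  exists f : nat -> Z,
    (forall j, (j < length ds)%nat -> f j = nth j ds 0%Z) /\
    (forall j, (length ds <= j)%nat -> digit n (f j)) /\
    is_series (fun j => IZR (f j) * binvpow n (S j))%C z.
Proof.
  intros Hk [e [[d [Hd He]] Hz]]. set (k := length ds) in *.
  set (f := fun j => if (j <? k)%nat then nth j ds 0%Z else d (j - k)%nat).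
  exists f. split; [|split].
  - intros j Hj. unfold f. apply Nat.ltb_lt in Hj. now rewrite Hj.
  - intros j Hj. unfold f. apply Nat.ltb_ge in Hj. rewrite Hj. apply Hd.
  - apply (is_series_decr_n _ k); [lia|].
    apply (is_series_Cmult_l (binvpow n k)) in He.
    replace (plus z _) with (binvpow n k * e)%C.
    + eapply is_series_ext; [|exact He]. intros i. unfold f. simpl.
      replace (k + i <? k)%nat with false by (symmetry; apply Nat.ltb_ge; lia).
      replace (k + i - k)%nat with i by lia.
      rewrite !binvpow_Cpow, <- Nat.add_succ_r, Cpow_add_r. ring.
    + change (plus z (opp (sum_n ?a ?N))) with (z - sum_n a N)%C.
      rewrite sum_n_csum. replace (S (Nat.pred k)) with k by lia.
      rewrite Hz, (csum_ext_lt (fun j => IZR (f j) * binvpow n (S j))%C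
                           (fun j => IZR (nth j ds 0%Z) * binvpow n (S j))%C).
      * ring.
      * intros j Hj. unfold f. apply Nat.ltb_lt in Hj. now rewrite Hj.
Qed.

(* Since 1/b = -(n + i)/(n^2 + 1), the real and imaginary parts of w/b are
   (Im w - n Re w)/(n^2 + 1) and -(Re w + n Im w)/(n^2 + 1).  For the norm
   |Re w| + p |Im w| the triangle inequality bounds the norm of w/b by
   |Re w| + (1 + p n)/(n^2 + 1) |Im w|, and the choice p = n^2 - n + 1, i.e.
   p + n = n^2 + 1, leaves exactly the margin (p^2 - 1)/(n^2 + 1) |Im w|. *)
Definition lyap_weight (n : nat) : R := INR n * INR n - INR n + 1.

Definition lyap_rate (n : nat) : R :=
  (lyap_weight n * lyap_weight n - 1) / (INR n * INR n + 1).

Definition lyap_norm (n : nat) (w : C) : R := Rabs (Re w) + lyap_weight n * Rabs (Im w).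

Lemma lyap_norm_lyapunov n : (1 <= n)%nat -> lyapunov (/ base n)%C (lyap_rate n) (lyap_norm n).
Proof.
  intros Hn. apply le_INR in Hn. change (INR 1) with 1 in Hn.
  set (x := INR n) in *. set (p := lyap_weight n). set (q := x * x + 1).
  assert (p_def : p = x * x - x + 1) by reflexivity.
  assert (q_pos : 0 < q) by (unfold q; nra).
  assert (p_ge1 : 1 <= p) by nra.
  split.
  - unfold lyap_rate. fold p. apply Rmult_le_pos; [nra | apply Rlt_le, Rinv_0_lt_compat; exact q_pos].
  - intros w. unfold lyap_norm. pose proof (Rabs_pos (Re w)). pose proof (Rabs_pos (Im w)). fold p. nra.
  - intros [w1 w2]. unfold lyap_norm, lyap_rate. fold p. fold x. fold q.
    assert (Hre : Re ((w1, w2) * / base n)%C = (w2 - x * w1) / q).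
    { unfold Re, Cmult, Cinv, base; simpl. fold x. unfold q. field. nra. }
    assert (Him : Im ((w1, w2) * / base n)%C = - (w1 + x * w2) / q).
    { unfold Im, Cmult, Cinv, base; simpl. fold x. unfold q. field. nra. }
    rewrite Hre, Him. unfold Re, Im; simpl.
    unfold Rdiv. rewrite !Rabs_mult, Rabs_inv, (Rabs_pos_eq q), Rabs_Ropp by lra.
    assert (HA : Rabs (w2 - x * w1) <= Rabs w2 + x * Rabs w1).
    { pose proof (Rabs_triang w2 (- (x * w1))) as T.
      rewrite Rabs_Ropp, Rabs_mult, (Rabs_pos_eq x) in T by lra. exact T. }
    assert (HB : Rabs (w1 + x * w2) <= Rabs w1 + x * Rabs w2).
    { pose proof (Rabs_triang w1 (x * w2)) as T.
      rewrite Rabs_mult, (Rabs_pos_eq x) in T by lra. exact T. }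
    assert (HpB : p * Rabs (w1 + x * w2) <= p * (Rabs w1 + x * Rabs w2))
      by (apply Rmult_le_compat_l; lra).
    apply (Rmult_le_reg_l q); [exact q_pos|].
    replace (q * _) with ((p * p - 1) * Rabs w2 + Rabs (w2 - x * w1) + p * Rabs (w1 + x * w2))
      by (field; lra).
    unfold q. rewrite p_def in *. nra.
Qed.

Lemma lyap_norm_1 n : lyap_norm n (RtoC 1) = 1.
Proof. unfold lyap_norm, RtoC, Re, Im; simpl. rewrite Rabs_R1, Rabs_R0. ring. Qed.

Lemma base_mul_inv n (c : C) : (c * base n * / base n)%C = c.
Proof. field. apply base_neq0. Qed.

Definition lyapunov_bounded (n : nat) (e : R) : Prop :=
  forall K Phi (c : C), lyapunov (/ base n)%C K Phi ->
    K * (e * Rabs (Im c)) <= 2 * (INR n * INR n) * Phi (c * / base n)%C.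

(* For n = 2 the estimate with c = b only gives e <= 5, so the Lyapunov
   inequality is iterated once more and c = b^2 is used. *)
Lemma lyapunov_bounded_2 e : lyapunov_bounded 2 e -> e < 4.
Proof.
  intros Hbound.
  pose proof (Hbound _ _ (base 2 * base 2)%C
                (lyapunov_lift _ _ _ (lyap_norm_lyapunov 2 ltac:(lia)))) as H.
  rewrite !base_mul_inv in H.
  replace (base 2 * / base 2)%C with (RtoC 1) in H by (field; apply base_neq0).
  rewrite lyap_norm_1 in H.
  replace (Im (base 2 * base 2)%C) with (- 4) in H by (unfold Im, Cmult, base; simpl; ring).
  replace (Im (base 2)) with 1 in H by reflexivity.
  replace (lyap_rate 2) with (8 / 5) in H by (unfold lyap_rate, lyap_weight; simpl; field).
  replace (INR 2) with 2 in H by (simpl; ring).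
  rewrite Rabs_R1, Rabs_left in H by lra.
  lra.
Qed.

Lemma lyapunov_bounded_rate n e :
  (1 <= n)%nat -> lyapunov_bounded n e -> lyap_rate n * e <= 2 * (INR n * INR n).
Proof.
  intros Hn Hbound. pose proof (Hbound _ _ (base n) (lyap_norm_lyapunov n Hn)) as H.
  replace (base n * / base n)%C with (RtoC 1) in H by (field; apply base_neq0).
  replace (Im (base n)) with 1 in H by reflexivity.
  rewrite lyap_norm_1, Rabs_R1, !Rmult_1_r in H. exact H.
Qed.

Lemma rate_bound_lt x e : 3 <= x ->
  ((x * x - x + 1) * (x * x - x + 1) - 1) / (x * x + 1) * e <= 2 * (x * x) ->
  e < 4 /\ (5 <= x -> e < 3).
Proof.
  intros Hx H. set (r := (x * x - x + 1) * (x * x - x + 1) - 1) in H.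
  assert (r_pos : 0 < r) by (unfold r; nra).
  assert (Hre : r * e <= 2 * (x * x) * (x * x + 1)).
  { apply (Rmult_le_compat_r (x * x + 1)) in H; [|nra].
    replace (r / (x * x + 1) * e * (x * x + 1)) with (r * e) in H by (field; nra). exact H. }
  split.
  - apply Rnot_le_lt. intros He.
    assert (0 <= (x - 3) * (x * x - x + 2)) by (apply Rmult_le_pos; nra).
    assert (r * 4 <= r * e) by (apply Rmult_le_compat_l; lra).
    unfold r in *. nra.
  - intros Hx5. apply Rnot_le_lt. intros He.
    assert (0 <= (x - 5) * (x * x - x + 2)) by (apply Rmult_le_pos; nra).
    assert (r * 3 <= r * e) by (apply Rmult_le_compat_l; lra).
    unfold r in *. nra.
Qed.

Lemma lyapunov_bounded_lt n e : (2 <= n)%nat -> lyapunov_bounded n e ->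
  e < 4 /\ ((5 <= n)%nat -> e < 3).
Proof.
  intros Hn Hbound. destruct (Nat.eq_dec n 2) as [->|Hn3].
  - split; [now apply lyapunov_bounded_2 | lia].
  - apply lyapunov_bounded_rate in Hbound; [|lia].
    assert (Hx : INR 3 <= INR n) by (apply le_INR; lia).
    replace (INR 3) with 3 in Hx by (simpl; ring).
    destruct (rate_bound_lt (INR n) e Hx Hbound) as [Hlt4 Hlt3].
    split; [exact Hlt4|]. intros H5. apply Hlt3.
    apply le_INR in H5. replace (INR 5) with 5 in H5 by (simpl; ring). exact H5.
Qed.

Lemma base_inv_neq0 n : (/ base n)%C <> RtoC 0.
Proof.
  intros H. pose proof (Cinv_r (base n) (base_neq0 n)) as H1.
  rewrite H, Cmult_0_r in H1. injection H1. lra.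
Qed.

Lemma first_difference (f f' : nat -> Z) j : f j <> f' j ->
  exists j0, (j0 <= j)%nat /\ f j0 <> f' j0 /\ forall i, (i < j0)%nat -> f i = f' i.
Proof.
  intros Hj.
  destruct (dec_inh_nat_subset_has_unique_least_element (fun i => f i <> f' i))
    as [j0 [[Hj0 Hmin] _]].
  - intros i. destruct (Z.eq_dec (f i) (f' i)); tauto.
  - exists j. exact Hj.
  - exists j0. split; [now apply Hmin|]. split; [exact Hj0|].
    intros i Hi. destruct (Z.eq_dec (f i) (f' i)) as [E|E]; [exact E|].
    apply Hmin in E. lia.
Qed.

Lemma expansion_digit_bound n (D : Z -> Prop) (ds : list Z) (f : nat -> Z) :
  (forall x, D x -> (0 <= x <= Z.of_nat (n * n))%Z) -> List.Forall (diffset D) ds ->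
  (forall j, (j < length ds)%nat -> f j = nth j ds 0%Z) ->
  (forall j, (length ds <= j)%nat -> digit n (f j)) ->
  forall j, (Z.abs (f j) <= Z.of_nat (n * n))%Z.
Proof.
  intros HD HF Hf_ds Hf_dig j. destruct (Nat.lt_ge_cases j (length ds)) as [Hj|Hj].
  - rewrite Hf_ds by exact Hj.
    destruct (proj1 (Forall_nth _ _) HF j 0%Z Hj) as [a [b [Ha [Hb ->]]]].
    apply HD in Ha. apply HD in Hb. lia.
  - destruct (Hf_dig j Hj). lia.
Qed.

Lemma digit_sub_abs_le n (a b : Z) :
  (Z.abs a <= Z.of_nat (n * n))%Z -> (Z.abs b <= Z.of_nat (n * n))%Z ->
  Rabs (IZR a - IZR b) <= 2 * (INR n * INR n).
Proof.
  intros Ha Hb. rewrite <- minus_IZR, <- abs_IZR, <- mult_INR, INR_IZR_INZ, <- mult_IZR.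
  apply IZR_le. lia.
Qed.

Lemma is_series_expansion_sub n (f f' : nat -> Z) z :
  is_series (fun j => IZR (f j) * binvpow n (S j))%C z ->
  is_series (fun j => IZR (f' j) * binvpow n (S j))%C z ->
  is_series (fun j => RtoC (IZR (f j) - IZR (f' j)) * (/ base n) ^ S j)%C (RtoC 0).
Proof.
  intros Hf Hf'. pose proof (is_series_minus _ _ _ _ Hf Hf') as Hsub.
  replace (RtoC 0) with (plus z (opp z)) by exact (plus_opp_r z).
  eapply is_series_ext; [|exact Hsub]. intros j. simpl.
  change (plus ?a (opp ?b)) with (a - b)%C. rewrite binvpow_Cpow, Cpow_S, RtoC_minus. ring.
Qed.

Theorem lemma4p8 (n : nat) (D : Z -> Prop) (k : nat) (ds ds' : list Z) :
  (2 <= n)%nat ->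
  (forall x, D x -> (0 <= x <= Z.of_nat (n * n))%Z) ->
  sparse n (diffset D) ->
  (1 <= k)%nat ->
  length ds = k -> length ds' = k ->
  List.Forall (diffset D) ds -> List.Forall (diffset D) ds' ->
  (exists j, (j < k)%nat /\ nth j ds 0%Z <> nth j ds' 0%Z) ->
  forall z : C, ~ (in_tile n ds z /\ in_tile n ds' z).
Proof.
  intros Hn HD Hsparse Hk Hlen Hlen' HF HF' [j [Hj Hne]] z [Hz Hz'].
  destruct (tile_expansion n ds z) as [f [Hf_ds [Hf_dig Hf]]]; [lia | exact Hz |].
  destruct (tile_expansion n ds' z) as [f' [Hf'_ds [Hf'_dig Hf']]]; [lia | exact Hz' |].
  rewrite <- Hf_ds, <- Hf'_ds in Hne by lia.
  destruct (first_difference f f' j Hne) as [j0 [Hj0 [Hne0 Hbelow]]].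
  destruct (lyapunov_bounded_lt n (Rabs (IZR (f j0) - IZR (f' j0))) Hn) as [Hgap4 Hgap3].
  { intros K Phi c HPhi.
    apply (lyapunov_first_coeff _ _ _ _ (fun i => IZR (f i) - IZR (f' i)) j0 c HPhi).
    - apply base_inv_neq0.
    - intros i. apply digit_sub_abs_le;
        [apply (expansion_digit_bound n D ds) | apply (expansion_digit_bound n D ds')]; assumption.
    - intros i Hi. rewrite Hbelow by exact Hi. ring.
    - exact (is_series_expansion_sub n f f' z Hf Hf'). }
  assert (Hdiff : diffset D (f j0) /\ diffset D (f' j0)).
  { rewrite Hf_ds, Hf'_ds by lia. split; apply Forall_nth; auto; lia. }
  destruct (Hsparse _ _ (proj1 Hdiff) (proj2 Hdiff) Hne0) as [Hsparse5 Hsparse2].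
  rewrite <- minus_IZR, <- abs_IZR in Hgap4, Hgap3.
  destruct (le_lt_dec 5 n) as [H5|H4].
  - apply lt_IZR in Hgap3; [|exact H5]. specialize (Hsparse5 H5). lia.
  - apply lt_IZR in Hgap4. specialize (Hsparse2 ltac:(lia)). lia.
Qed.
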